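(* Let $f(x)=x^5+px^4+qx^3+rx^2+sx+t$ with real coefficients and let $D$, $L_1$ be as in the context. Suppose $D=0$ and $L_1\neq 0$. Then $f$ has exactly one double root and three simple roots. Moreover, if $L_1>0$ then the double root and all three simple roots are real (4 distinct real roots), and if $L_1<0$ then $f$ has one real double root, one real simple root and a pair of non-real complex conjugate simple roots.
   Context: Let $\alpha_1,\dots,\alpha_5\in\mathbb{C}$ be the roots of $f$ listed with multiplicity. $D=\prod_{1\le i<j\le 5}(\alpha_i-\alpha_j)^2$ is the discriminant of $f$. $L_1=-264ps^2r-12p^3tq^2+36r^3pq-124srpq^2+28srp^3q+260sptq-132p^2qrt+240pr^2t+234sqr^2+32p^4tr+48ptq^3-56sp^3t-80q^2rt+194qs^2p^2-600str-6q^3sp^2+2p^2q^2r^2-12sr^2p^2-54r^4+320s^3-8q^3r^2-8r^3p^3+250qt^2-176q^2s^2+24q^4s-36p^4s^2-100p^2t^2$. *)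

From HB Require Import structures.
From mathcomp Require Import all_boot all_order all_algebra.
Set Implicit Arguments. Unset Strict Implicit. Unset Printing Implicit Defensive.
Import Order.TTheory GRing.Theory Num.Theory.
Local Open Scope ring_scope.

Definition quintic (C : numClosedFieldType) (p q r s t : C) : {poly C} :=
  'X^5 + p%:P * 'X^4 + q%:P * 'X^3 + r%:P * 'X^2 + s%:P * 'X + t%:P.

Definition disc_of_roots (C : numClosedFieldType) (al : seq C) : C :=
  \prod_(i < size al) \prod_(j < size al | (i < j)%N) (al`_i - al`_j) ^+ 2.

Definition L1 (C : numClosedFieldType) (p q r s t : C) : C :=
  - 264 * p * s^+2 * r - 12 * p^+3 * t * q^+2 + 36 * r^+3 * p * q
  - 124 * s * r * p * q^+2 + 28 * s * r * p^+3 * q + 260 * s * p * t * q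
  - 132 * p^+2 * q * r * t + 240 * p * r^+2 * t + 234 * s * q * r^+2
  + 32 * p^+4 * t * r + 48 * p * t * q^+3 - 56 * s * p^+3 * t
  - 80 * q^+2 * r * t + 194 * q * s^+2 * p^+2 - 600 * s * t * r
  - 6 * q^+3 * s * p^+2 + 2 * p^+2 * q^+2 * r^+2 - 12 * s * r^+2 * p^+2
  - 54 * r^+4 + 320 * s^+3 - 8 * q^+3 * r^+2 - 8 * r^+3 * p^+3
  + 250 * q * t^+2 - 176 * q^+2 * s^+2 + 24 * q^+4 * s
  - 36 * p^+4 * s^+2 - 100 * p^+2 * t^+2.

From HB Require Import structures.
From mathcomp Require Import all_boot all_order all_algebra.
From mathcomp Require Import ring.
Set Implicit Arguments. Unset Strict Implicit. Unset Printing Implicit Defensive.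
Import Order.TTheory GRing.Theory Num.Theory.
Local Open Scope ring_scope.

(* Let al be the five roots of the real quintic f.  Since D = 0, al has a
   repeated entry, so al is a rearrangement of [a; a; b; c; d].  Comparing
   coefficients of f with the expanded product expresses p, ..., t through
   a, b, c, d, and then L1 = 2 V^2 with V = pdiff4 a b c d the product of the
   pairwise differences of a, b, c, d.  Hence L1 <> 0 makes a, b, c, d
   pairwise distinct: exactly one double root.
   As f has real coefficients, complex conjugation permutes al with
   multiplicities.  The unique root of multiplicity two is therefore real, and
   {b, c, d} is conjugation-stable, so either b, c, d are all real or one of
   them is real and the other two are a non-real conjugate pair.  In the first
   case V is real and nonzero, so L1 > 0; in the second V^2 is a positive real
   times (u - conj u)^2 = - |u - conj u|^2 < 0, so L1 < 0.  The sign of L1 thus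
   tells which configuration occurs. *)

Lemma not_uniq_perm_double (T : eqType) (s : seq T) :
  ~~ uniq s -> exists (x : T) (s' : seq T), perm_eq s [:: x, x & s'].
Proof.
elim: s => [|y s IHs] //=; rewrite negb_and negbK.
have [ys _ | _ /= /IHs [x [s' perm_s]]] := boolP (y \in s).
  by exists y, (rem y s); rewrite perm_cons perm_to_rem.
exists x, (y :: s').
by rewrite perm_sym (perm_catCA [:: x; x] [:: y]) perm_sym perm_cons.
Qed.

Lemma disc_of_roots_eq0 (C : numClosedFieldType) (al : seq C) :
  disc_of_roots al = 0 -> ~~ uniq al.
Proof.
move/eqP; rewrite /disc_of_roots => /prodf_eq0 [i _ /prodf_eq0 [j lt_ij]].
rewrite expf_eq0 subr_eq0 => /andP [_ /eqP eq_ij].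
by apply/(uniqPn 0); exists i, j; rewrite lt_ij ltn_ord.
Qed.

Lemma quintic_roots_double (C : numClosedFieldType) (al : seq C) :
  size al = 5%N -> disc_of_roots al = 0 ->
  exists a b c d : C, perm_eq al [:: a; a; b; c; d].
Proof.
move=> size_al /disc_of_roots_eq0 /not_uniq_perm_double [a [s perm_al]].
have := perm_size perm_al; rewrite size_al.
by case: s perm_al => [|b [|c [|d [|? ?]]]] // perm_al _; exists a, b, c, d.
Qed.

Lemma conj_stable_roots (C : numClosedFieldType) (f : {poly C}) (al : seq C) :
  map_poly Num.conj f = f -> f = \prod_(z <- al) ('X - z%:P) ->
  perm_eq (map Num.conj al) al.
Proof.
move=> f_real f_roots; apply: prod_XsubC_eq.
by rewrite prod_map_poly -f_roots f_real.
Qed.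

Lemma quintic_conj (C : numClosedFieldType) (p q r s t : C) :
  p \is Num.real -> q \is Num.real -> r \is Num.real -> s \is Num.real ->
  t \is Num.real -> map_poly Num.conj (quintic p q r s t) = quintic p q r s t.
Proof.
move=> /conj_Creal hp /conj_Creal hq /conj_Creal hr /conj_Creal hs /conj_Creal ht.
rewrite /quintic !rmorphD /= !map_polyXn !(rmorphM _ _%:P) /=.
by rewrite !map_polyXn !map_polyC map_polyX /= hp hq hr hs ht.
Qed.

(* In a conjugation-stable multiset where a is the only repeated element, a is
   real (its conjugate has the same multiplicity) and the rest is stable. *)
Lemma conj_stable_double_real (C : numClosedFieldType) (a : C) (s : seq C) :
  uniq (a :: s) -> perm_eq (map Num.conj [:: a, a & s]) [:: a, a & s] ->
  a \is Num.real /\ perm_eq (map Num.conj s) s.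
Proof.
move=> uniq_as conj_stable.
have count_conj : count_mem a^* [:: a, a & s] = 2.
  rewrite -(permP conj_stable) count_map.
  rewrite (@eq_count _ _ (pred1 a)) => [|z]; last exact: (inj_eq (can_inj conjCK)).
  by move: uniq_as; rewrite /= eqxx => /andP [/count_memPn -> _].
have a_real : a^* = a.
  have [//|conj_a] := eqVneq a^* a; move: count_conj.
  rewrite /= (eq_sym a) (negbTE conj_a) count_uniq_mem; last by case/andP: uniq_as.
  by case: (_ \in s).
split; first exact/CrealP.
by move: conj_stable; rewrite /= a_real !perm_cons.
Qed.

Lemma conj_stable_triple (C : numClosedFieldType) (s : seq C) :
  size s = 3%N -> uniq s -> perm_eq (map Num.conj s) s ->
  all (fun z => z \is Num.real) s \/
  exists w u : C, [/\ perm_eq s [:: w; u; u^*], w \is Num.real & u \isn't Num.real].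
Proof.
move=> size_s uniq_s conj_stable.
have conj_mem z : z \in s -> z^* \in s.
  by move=> zs; rewrite -(perm_mem conj_stable) map_f.
have [|/allPn [u us u_nreal]] := boolP (all _ s); [by left | right].
have ucs : u^* \in rem u s.
  by rewrite (mem_rem_uniq _ uniq_s) inE -CrealE u_nreal conj_mem.
have perm_s : perm_eq s [:: u, u^* & rem u^* (rem u s)].
  by apply: perm_trans (perm_to_rem us) _; rewrite perm_cons perm_to_rem.
move: (perm_s) (perm_size perm_s); rewrite size_s.
case: (rem _ _) => [|w [|? ?]] // {}perm_s _.
have uniq3 : uniq [:: u; u^*; w] by rewrite -(perm_uniq perm_s).
exists w, u; split => //; first by rewrite perm_sym (perm_catC [:: w]) perm_sym.
have : w^* \in [:: u; u^*; w].
  by rewrite -(perm_mem perm_s) conj_mem // (perm_mem perm_s) !inE eqxx !orbT.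
rewrite CrealE !inE => /or3P [/eqP wu | /eqP /(can_inj conjCK) wu | -> //].
  by move: uniq3; rewrite -wu conjCK /= !inE eqxx /= andbF.
by move: uniq3; rewrite wu /= !inE eqxx !orbT.
Qed.

Definition pdiff4 (R : comPzRingType) (a b c d : R) : R :=
  (a - b) * (a - c) * (a - d) * (b - c) * (b - d) * (c - d).

Lemma pdiff4_eq0 (R : idomainType) (a b c d : R) :
  (pdiff4 a b c d == 0) = ~~ uniq [:: a; b; c; d].
Proof.
rewrite /pdiff4 !mulf_eq0 !subr_eq0 /= !inE !negb_or andbT !negb_and !negbK.
by rewrite -!orbA.
Qed.

Lemma quintic_inj (C : numClosedFieldType) (p q r s t p' q' r' s' t' : C) :
  quintic p q r s t = quintic p' q' r' s' t' ->
  [/\ p = p', q = q', r = r', s = s' & t = t'].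
Proof.
move=> eq_f; have coef i : (quintic p q r s t)`_i = (quintic p' q' r' s' t')`_i.
  by rewrite eq_f.
move: (coef 4%N) (coef 3%N) (coef 2%N) (coef 1%N) (coef 0%N).
by rewrite /quintic !coefE /= !(mulr0, mulr1, addr0, add0r).
Qed.

Lemma quintic_double_root (C : numClosedFieldType) (a b c d : C) :
  \prod_(z <- [:: a; a; b; c; d]) ('X - z%:P) =
  quintic (- (2 * a + b + c + d))
    (a ^+ 2 + 2 * a * (b + c + d) + (b * c + b * d + c * d))
    (- (a ^+ 2 * (b + c + d) + 2 * a * (b * c + b * d + c * d) + b * c * d))
    (a ^+ 2 * (b * c + b * d + c * d) + 2 * a * b * c * d)
    (- (a ^+ 2 * b * c * d)).
Proof.
rewrite !big_cons big_nil /quintic.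
by rewrite !(polyCN, polyCD, polyCM, rmorphXn, rmorph_nat); ring.
Qed.

Lemma L1_double_root (C : numClosedFieldType) (p q r s t : C) (al : seq C)
    (a b c d : C) :
  quintic p q r s t = \prod_(z <- al) ('X - z%:P) ->
  perm_eq al [:: a; a; b; c; d] ->
  L1 p q r s t = 2 * pdiff4 a b c d ^+ 2.
Proof.
move=> f_roots perm_al; rewrite (perm_big _ perm_al) quintic_double_root in f_roots.
by case: (quintic_inj f_roots) => -> -> -> -> ->; rewrite /L1 /pdiff4; ring.
Qed.

Lemma pdiff4_real_sqr_gt0 (C : numClosedFieldType) (a b c d : C) :
  all (fun z => z \is Num.real) [:: a; b; c; d] -> uniq [:: a; b; c; d] ->
  0 < pdiff4 a b c d ^+ 2.
Proof.
case/and4P => ra rb rc /andP [rd _] uniq_abcd.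
rewrite real_exprn_even_gt0 ?rpredM ?rpredB //.
by rewrite pdiff4_eq0 uniq_abcd.
Qed.

(* Two distinct reals and a non-real conjugate pair give pdiff4^2 < 0, since
   the factor (u - conj u)^2 = - |u - conj u|^2 is negative and the rest is real. *)
Lemma pdiff4_conj_sqr_lt0 (C : numClosedFieldType) (a w u : C) :
  a \is Num.real -> w \is Num.real -> uniq [:: a; w; u; u^*] ->
  pdiff4 a w u u^* ^+ 2 < 0.
Proof.
move=> ra rw uniq_awu.
have pd_neq0 : pdiff4 a w u u^* != 0 by rewrite pdiff4_eq0 uniq_awu.
set V := (a - w) * (a - u) * (a - u^*) * (w - u) * (w - u^*).
have V_real : V \is Num.real.
  apply/CrealP; rewrite /V !(rmorphM, rmorphB) /= (conj_Creal ra) (conj_Creal rw).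
  by rewrite conjCK; ring.
have gap_sqr : (u - u^*) ^+ 2 = - `|u - u^*| ^+ 2.
  by rewrite normCK rmorphB /= conjCK; ring.
move: pd_neq0; rewrite /pdiff4 -/V mulf_eq0 negb_or => /andP [V_neq0 gap_neq0].
rewrite exprMn gap_sqr mulrN oppr_lt0 mulr_gt0 //.
  by rewrite real_exprn_even_gt0 ?V_neq0.
by rewrite exprn_gt0 ?normr_gt0.
Qed.

Unset Implicit Arguments.

Theorem mainTheorem2 (C : numClosedFieldType) (p q r s t : C)
  (hp : p \is Num.real) (hq : q \is Num.real) (hr : r \is Num.real)
  (hs : s \is Num.real) (ht : t \is Num.real)
  (al : seq C) (hsize : size al = 5%N)
  (hroots : quintic p q r s t = \prod_(a <- al) ('X - a%:P))
  (hD : disc_of_roots al = 0) (hL : L1 p q r s t != 0) :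
  (exists a b c d : C,
      perm_eq al [:: a; a; b; c; d] /\ uniq [:: a; b; c; d])
  /\ (0 < L1 p q r s t ->
      exists a b c d : C,
        [/\ perm_eq al [:: a; a; b; c; d], uniq [:: a; b; c; d]
          & all (fun z => z \is Num.real) [:: a; b; c; d]])
  /\ (L1 p q r s t < 0 ->
      exists a b c d : C,
        [/\ perm_eq al [:: a; a; b; c; d], uniq [:: a; b; c; d],
            a \is Num.real, b \is Num.real
          & c \isn't Num.real /\ d = Num.conj c]).
Proof.
have [a [b [c [d perm_al]]]] := quintic_roots_double hsize hD.
have L1_abcd := L1_double_root hroots perm_al.
have uniq_abcd : uniq [:: a; b; c; d].
  rewrite -[uniq _]negbK -pdiff4_eq0; apply: contra hL => /eqP pd0.
  by rewrite L1_abcd pd0 expr0n mulr0.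
have conj_al := conj_stable_roots (quintic_conj hp hq hr hs ht) hroots.
have [a_real conj_bcd] : a \is Num.real /\ perm_eq (map Num.conj [:: b; c; d]) [:: b; c; d].
  apply: conj_stable_double_real => //.
  by rewrite -(permPr perm_al) -(permPl (perm_map _ perm_al)).
split; first by exists a, b, c, d.
have /andP [_ uniq_bcd] := uniq_abcd.
have [bcd_real | [w [u [perm_bcd w_real u_nreal]]]] :=
  @conj_stable_triple _ [:: b; c; d] erefl uniq_bcd conj_bcd.
  have L1_pos : 0 < L1 p q r s t.
    by rewrite L1_abcd mulr_gt0 // pdiff4_real_sqr_gt0 //= a_real.
  split=> [_ | L1_neg]; first by exists a, b, c, d; split; rewrite //= a_real.
  by have := lt_trans L1_pos L1_neg; rewrite ltxx.
have perm_al' : perm_eq al [:: a; a; w; u; u^*] by rewrite (permPl perm_al) !perm_cons.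
have uniq_awu : uniq [:: a; w; u; u^*].
  by rewrite -(perm_uniq (_ : perm_eq [:: a; b; c; d] _)) // perm_cons.
have L1_neg : L1 p q r s t < 0.
  by rewrite (L1_double_root hroots perm_al') pmulr_rlt0 // pdiff4_conj_sqr_lt0.
split=> [L1_pos | _]; last by exists a, w, u, u^*.
by have := lt_trans L1_neg L1_pos; rewrite ltxx.
Qed.
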